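(* Let $G'=(V',E')$ be a connected subgraph of the hypercube graph on $N$ with $\emptyset\in V'$ and $N\in V'$, and let $w\colon E'\to(0,\infty)$. Let $v\colon V'\to\mathbb{R}$ with $v(\emptyset)=0$. For each $i\in N$ there is a unique $v_i\colon V'\to\mathbb{R}$ with $v_i(\emptyset)=0$ and $\mathrm{d}v_i = P\mathrm{d}_iv$, and these satisfy: (a) $\sum_{i\in N}v_i=v$; (b) if $v(S\cup\{i\})-v(S)=0$ for every edge $(S,S\cup\{i\})\in E'$, then $v_i=0$; (d) for any two such $v,v'$ and $\alpha,\alpha'\in\mathbb{R}$, $(\alpha v+\alpha'v')_i=\alpha v_i+\alpha' v'_i$.
   Context: Let $N$ be a finite set of players. The hypercube graph has vertex set $2^N$ and oriented edges $(S,S\cup\{i\})$ for $i\in N$, $S\subset N\setminus\{i\}$; $G'$ is a subgraph (a subset $V'$ of vertices and a subset $E'$ of edges between vertices of $V'$) with the inherited orientation. $\ell^2(V')$ is the space of real functions on $V'$ and $\ell^2_w(E')$ the space of real functions on $E'$ with inner product $\langle f,g\rangle_w=\sum_{e\in E'}w(e)f(e)g(e)$. $\mathrm{d}\colon\ell^2(V')\to\ell^2_w(E')$ is $\mathrm{d}u(S,S\cup\{i\})=u(S\cup\{i\})-u(S)$; for $i\in N$, $\mathrm{d}_i u(S,S\cup\{j\})=u(S\cup\{i\})-u(S)$ if $j=i$ and $0$ if $j\neq i$, for edges in $E'$. $P$ is the $\langle\cdot,\cdot\rangle_w$-orthogonal projection of $\ell^2_w(E')$ onto the range of $\mathrm{d}$.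 *)

From HB Require Import structures.
From mathcomp Require Import all_boot all_order all_algebra.
Set Implicit Arguments. Unset Strict Implicit. Unset Printing Implicit Defensive.
Import Order.TTheory GRing.Theory Num.Theory.
Local Open Scope ring_scope.

(* Players: a finite type T (the set N is [set: T]).  Vertices of the hypercube
   are subsets {set T}.  An oriented hypercube edge (S, S :|: [set i]) with
   i \notin S is encoded by the pair (S, i). *)

Definition edge (T : finType) := ({set T} * T)%type.

Definition is_subgraph (T : finType) (V : {set {set T}}) (E : {set edge T}) : Prop :=
  forall e, e \in E -> [/\ e.2 \notin e.1, e.1 \in V & e.1 :|: [set e.2] \in V].

Definition adj (T : finType) (E : {set edge T}) : rel {set T} :=
  fun S S' => [exists e in E,
     ((e.1 == S) && (e.1 :|: [set e.2] == S')) ||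
     ((e.1 == S') && (e.1 :|: [set e.2] == S))].

Definition connected_subgraph (T : finType) (V : {set {set T}}) (E : {set edge T}) : Prop :=
  forall S S', S \in V -> S' \in V -> connect (adj E) S S'.

Definition dd (R : ringType) (T : finType) (u : {set T} -> R) : edge T -> R :=
  fun e => u (e.1 :|: [set e.2]) - u e.1.

Definition ddi (R : ringType) (T : finType) (i : T) (u : {set T} -> R) : edge T -> R :=
  fun e => if e.2 == i then u (e.1 :|: [set i]) - u e.1 else 0.

Definition ipw (R : ringType) (T : finType) (E : {set edge T}) (w : edge T -> R)
  (f g : edge T -> R) : R := \sum_(e in E) w e * f e * g e.

(* g = P f, where P is the <.,.>_w-orthogonal projection of l2_w(E') onto the
   range of d: g lies in the range of d and f - g is w-orthogonal to that range.
   Functions on E' are compared on E' only. *)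
Definition IsOrthProj (R : ringType) (T : finType) (V : {set {set T}}) (E : {set edge T})
  (w : edge T -> R) (f g : edge T -> R) : Prop :=
  (exists u : {set T} -> R, forall e, e \in E -> g e = dd u e) /\
  (forall u : {set T} -> R, ipw E w (fun e => f e - g e) (dd u) = 0).

Definition is_component (R : ringType) (T : finType) (V : {set {set T}}) (E : {set edge T})
  (w : edge T -> R) (v : {set T} -> R) (i : T) (ui : {set T} -> R) : Prop :=
  ui set0 = 0 /\ IsOrthProj V E w (ddi i v) (dd ui).

From HB Require Import structures.
From mathcomp Require Import all_boot all_order all_algebra.
From mathcomp Require Import ring.
Set Implicit Arguments. Unset Strict Implicit. Unset Printing Implicit Defensive.
Import Order.TTheory GRing.Theory Num.Theory.
Local Open Scope ring_scope.

(* Uniqueness: two potentials of the projection of the same f differ by a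
   function u with <du, du>_w = 0; positivity of w forces du = 0 on E', and
   connectedness makes u constant on V', hence zero once both vanish at the
   empty set.  Existence: the orthogonal projection onto the range of d is
   built by Gram-Schmidt, adjoining the indicator functions of the vertices one
   at a time.  Properties (a), (b) and (d) then follow from uniqueness, since
   sum_i d_i v = dv, d_i v = 0 for a null player i, and d_i is linear. *)

Definition proj_potential (R : nzRingType) (T : finType) (E : {set edge T})
  (w : edge T -> R) (f : edge T -> R) (u : {set T} -> R) : Prop :=
  forall u', ipw E w (fun e => f e - dd u e) (dd u') = 0.

Lemma is_componentP (R : nzRingType) (T : finType) (V : {set {set T}})
  (E : {set edge T}) (w : edge T -> R) v i ui :
  is_component V E w v i ui <-> ui set0 = 0 /\ proj_potential E w (ddi i v) ui.
Proof. by split=> [[u0 [_ o]] | [u0 o]]; do ![split] => //; exists ui. Qed.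

Section WeightedInnerProduct.
Variables (R : comNzRingType) (T : finType) (E : {set edge T}) (w : edge T -> R).

Lemma eq_ipw f f' g g' :
  {in E, f =1 f'} -> {in E, g =1 g'} -> ipw E w f g = ipw E w f' g'.
Proof. by move=> ef eg; apply: eq_bigr => e eE; rewrite ef // eg. Qed.

Lemma ipw_linear_l a b f g h :
  ipw E w (fun e => a * f e + b * g e) h = a * ipw E w f h + b * ipw E w g h.
Proof. by rewrite /ipw !mulr_sumr -big_split /=; apply: eq_bigr => e _; ring. Qed.

Lemma ipw_linear_r a b f g h :
  ipw E w h (fun e => a * f e + b * g e) = a * ipw E w h f + b * ipw E w h g.
Proof. by rewrite /ipw !mulr_sumr -big_split /=; apply: eq_bigr => e _; ring. Qed.

Lemma ipw_sum_l (F : T -> edge T -> R) h :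
  ipw E w (fun e => \sum_i F i e) h = \sum_i ipw E w (F i) h.
Proof.
rewrite /ipw exchange_big; apply: eq_bigr => e _.
by rewrite mulr_sumr mulr_suml; apply: eq_bigr.
Qed.

Lemma ipw0l f h : {in E, f =1 fun=> 0} -> ipw E w f h = 0.
Proof. by move=> f0; rewrite /ipw big1 // => e eE; rewrite f0 // mulr0 mul0r. Qed.

Lemma ipw0r f h : {in E, f =1 fun=> 0} -> ipw E w h f = 0.
Proof. by move=> f0; rewrite /ipw big1 // => e eE; rewrite f0 // mulr0. Qed.

Lemma dd_linear a b (u v : {set T} -> R) e :
  dd (fun S => a * u S + b * v S) e = a * dd u e + b * dd v e.
Proof. by rewrite /dd; ring. Qed.

Lemma eq_dd (u v : {set T} -> R) : u =1 v -> dd u =1 dd v.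
Proof. by move=> uv e; rewrite /dd !uv. Qed.

Lemma ddi_linear i a b (v v' : {set T} -> R) e :
  ddi i (fun S => a * v S + b * v' S) e = a * ddi i v e + b * ddi i v' e.
Proof. by rewrite /ddi; case: eqP => _; ring. Qed.

Lemma sum_ddi (v : {set T} -> R) e : \sum_i ddi i v e = dd v e.
Proof.
rewrite (bigD1 e.2) //= big1 => [|j /negbTE je]; last by rewrite /ddi eq_sym je.
by rewrite /ddi eqxx addr0.
Qed.

End WeightedInnerProduct.

Lemma dd_eq0_const (R : nzRingType) (T : finType) (V : {set {set T}})
  (E : {set edge T}) (u : {set T} -> R) :
  connected_subgraph V E -> set0 \in V -> {in E, dd u =1 fun=> 0} ->
  {in V, forall S, u S = u set0}.
Proof.
move=> conn V0 du0 S VS.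
have cl : closed (adj E) [pred S | u S == u set0].
  move=> A B /existsP[e /andP[eE /orP[] /andP[/eqP e1 /eqP e2]]];
    have := du0 e eE; rewrite /dd e2 e1 !inE => /eqP; rewrite subr_eq0 => /eqP ->//.
by have := closed_connect cl (conn _ _ V0 VS); rewrite !inE eqxx => /esym/eqP.
Qed.

Section Uniqueness.
Variables (R : realDomainType) (T : finType) (V : {set {set T}}).
Variables (E : {set edge T}) (w : edge T -> R).
Hypothesis w_gt0 : forall e, e \in E -> 0 < w e.

Lemma ipw_self_eq0 f : ipw E w f f = 0 -> {in E, f =1 fun=> 0}.
Proof.
move=> ff0 e eE; apply/eqP.
have wff_ge0 x : x \in E -> 0 <= w x * f x * f x.
  by move=> xE; rewrite -mulrA -expr2 mulr_ge0 ?sqr_ge0 // ltW ?w_gt0.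
move: (psumr_eq0P wff_ge0 ff0 eE) => /eqP.
by rewrite -mulrA mulf_eq0 (gt_eqF (w_gt0 eE)) mulf_eq0 orbb.
Qed.

Hypotheses (conn : connected_subgraph V E) (V0 : set0 \in V).

Lemma proj_potential_unique f u u' :
  proj_potential E w f u -> proj_potential E w f u' -> u set0 = u' set0 ->
  {in V, u =1 u'}.
Proof.
move=> pu pu' u0 S VS; pose x S := u S - u' S.
have dx0 : ipw E w (dd x) (dd x) = 0.
  transitivity (1 * ipw E w (fun e => f e - dd u' e) (dd x)
                + (-1) * ipw E w (fun e => f e - dd u e) (dd x)).
    by rewrite -ipw_linear_l; apply: eq_ipw => // e _; rewrite /dd /x; ring.
  by rewrite pu pu'; ring.
have := dd_eq0_const conn V0 (ipw_self_eq0 dx0) VS.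
by rewrite /x u0 subrr => /eqP; rewrite subr_eq0 => /eqP.
Qed.

End Uniqueness.

Section Existence.
Variables (R : realFieldType) (T : finType) (E : {set edge T}) (w : edge T -> R).
Hypothesis w_gt0 : forall e, e \in E -> 0 < w e.

Definition supported_on (l : seq {set T}) (u : {set T} -> R) : Prop :=
  forall S, S \notin l -> u S = 0.

Definition indicator (S0 : {set T}) : {set T} -> R := fun S => (S == S0)%:R.

(* Any u supported on S0 :: l is u S0 times (indicator S0 - u2) plus a function
   supported on l. *)
Lemma orth_supported_cons l S0 u2 g :
  supported_on l u2 ->
  (forall x, supported_on l x -> ipw E w g (dd x) = 0) ->
  ipw E w g (dd (fun S => indicator S0 S - u2 S)) = 0 ->
  forall x, supported_on (S0 :: l) x -> ipw E w g (dd x) = 0.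
Proof.
move=> u2l gl gS0 x xl.
pose y S := x S0 * u2 S + (if S == S0 then 0 else x S).
have yl : supported_on l y.
  move=> S Sl; rewrite /y u2l // mulr0 add0r.
  by case: eqP => // /eqP SS0; apply: xl; rewrite inE negb_or SS0.
transitivity (ipw E w g (fun e => x S0 * dd (fun S => indicator S0 S - u2 S) e
                                  + 1 * dd y e)).
  apply: eq_ipw => // e _; rewrite -dd_linear; apply: eq_dd => S.
  by rewrite /indicator /y; case: eqP => [->|_] /=; ring.
by rewrite ipw_linear_r gS0 gl //; ring.
Qed.

Lemma proj_supported_exists l f : exists u, supported_on l u /\
  forall x, supported_on l x -> ipw E w (fun e => f e - dd u e) (dd x) = 0.
Proof.
elim: l f => [|S0 l IHl] f.
  exists (fun=> 0); split=> // x x0.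
  by apply: ipw0r => e _; rewrite /dd !x0 ?subrr.
have [u1 [u1l o1]] := IHl f.
have [u2 [u2l o2]] := IHl (dd (indicator S0)).
pose s S := indicator S0 S - u2 S.
have os x : supported_on l x -> ipw E w (dd s) (dd x) = 0.
  by move=> xl; rewrite -(o2 x xl); apply: eq_ipw => // e _; rewrite /dd /s; ring.
have [ss0 | ss_neq0] := eqVneq (ipw E w (dd s) (dd s)) 0.
  exists u1; split; first by move=> S; rewrite inE negb_or => /andP[_ /u1l].
  apply: orth_supported_cons u2l o1 _.
  exact: ipw0r (ipw_self_eq0 w_gt0 ss0).
pose r e := f e - dd u1 e.
pose c := ipw E w r (dd s) / ipw E w (dd s) (dd s).
exists (fun S => 1 * u1 S + c * s S); split.
  move=> S; rewrite inE negb_or => /andP[/negbTE SS0 Sl].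
  by rewrite /s /indicator u1l // u2l // SS0 /=; ring.
have res x : ipw E w (fun e => f e - dd (fun S => 1 * u1 S + c * s S) e) x
             = 1 * ipw E w r x + (- c) * ipw E w (dd s) x.
  by rewrite -ipw_linear_l; apply: eq_ipw => // e _; rewrite dd_linear /r; ring.
apply: orth_supported_cons u2l _ _ => [x xl|].
  by rewrite res o1 // os //; ring.
by rewrite res /c; field.
Qed.

Lemma proj_potential_exists f : exists u, proj_potential E w f u.
Proof.
have [u [_ o]] := proj_supported_exists (enum [set: {set T}]) f.
by exists u => x; apply: o => S; rewrite mem_enum inE.
Qed.

Lemma component_exists (V : {set {set T}}) v i :
  exists ui, is_component V E w v i ui.
Proof.
have [u pu] := proj_potential_exists (ddi i v).
exists (fun S => u S - u set0); apply/is_componentP; split; first exact: subrr.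
by move=> x; rewrite -(pu x); apply: eq_ipw => // e _; rewrite /dd; ring.
Qed.

End Existence.

Section Components.
Variables (R : realFieldType) (T : finType) (V : {set {set T}}).
Variables (E : {set edge T}) (w : edge T -> R).
Hypotheses (conn : connected_subgraph V E) (V0 : set0 \in V).
Hypothesis w_gt0 : forall e, e \in E -> 0 < w e.

Let unique := proj_potential_unique w_gt0 conn V0.

Lemma component_unique v i ui ui' :
  is_component V E w v i ui -> is_component V E w v i ui' -> {in V, ui =1 ui'}.
Proof.
move=> /is_componentP[u0 pu] /is_componentP[u0' pu'].
by apply: unique pu pu' _; rewrite u0 u0'.
Qed.

Lemma sum_components v vs : v set0 = 0 ->
  (forall i, is_component V E w v i (vs i)) -> {in V, forall S, \sum_i vs i S = v S}.
Proof.
move=> v0 cvs; apply: (unique (f := fun e => \sum_i ddi i v e)).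
- move=> x; transitivity (\sum_i ipw E w (fun e => ddi i v e - dd (vs i) e) (dd x)).
    by rewrite -ipw_sum_l; apply: eq_ipw => // e _; rewrite sumrB /dd sumrB.
  by rewrite big1 // => i _; have /is_componentP[_ ->] := cvs i.
- by move=> x; apply: ipw0l => e _; rewrite sum_ddi subrr.
- by rewrite v0 big1 // => i _; have /is_componentP[->] := cvs i.
Qed.

Lemma component_null_player v i vi :
  is_component V E w v i vi ->
  (forall S, (S, i) \in E -> v (S :|: [set i]) - v S = 0) -> {in V, vi =1 fun=> 0}.
Proof.
move=> /is_componentP[vi0 pvi] null; apply: unique pvi _ vi0 => x.
apply: ipw0l => -[S j] SjE; rewrite /ddi /dd /=.
case: eqP => [ji|_]; last by rewrite !subrr.
by subst j; rewrite null // !subr0.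
Qed.

Lemma component_linear v v' a a' i vi vi' wi :
  is_component V E w v i vi -> is_component V E w v' i vi' ->
  is_component V E w (fun S => a * v S + a' * v' S) i wi ->
  {in V, wi =1 fun S => a * vi S + a' * vi' S}.
Proof.
move=> /is_componentP[vi0 pvi] /is_componentP[vi0' pvi'] /is_componentP[wi0 pwi].
apply: unique pwi _ _; last by rewrite wi0 vi0 vi0'; ring.
move=> x; transitivity (a * ipw E w (fun e => ddi i v e - dd vi e) (dd x)
                        + a' * ipw E w (fun e => ddi i v' e - dd vi' e) (dd x)).
  by rewrite -ipw_linear_l; apply: eq_ipw => // e _; rewrite ddi_linear dd_linear; ring.
by rewrite pvi pvi'; ring.
Qed.

End Components.

Theorem mainTheorem10 (R : realFieldType) (T : finType)
  (V : {set {set T}}) (E : {set edge T}) (w : edge T -> R)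
  (hsub : is_subgraph V E) (hconn : connected_subgraph V E)
  (h0 : set0 \in V) (hN : [set: T] \in V)
  (hw : forall e, e \in E -> 0 < w e) :
  (forall (v : {set T} -> R), v set0 = 0 -> forall i : T,
     (exists ui, is_component V E w v i ui) /\
     (forall ui ui', is_component V E w v i ui -> is_component V E w v i ui' ->
        forall S, S \in V -> ui S = ui' S)) /\
  (forall (v : {set T} -> R) (vs : T -> {set T} -> R), v set0 = 0 ->
     (forall i, is_component V E w v i (vs i)) ->
     forall S, S \in V -> \sum_(i : T) vs i S = v S) /\
  (forall (v : {set T} -> R) (vs : T -> {set T} -> R), v set0 = 0 ->
     (forall i, is_component V E w v i (vs i)) ->
     forall i, (forall S, (S, i) \in E -> v (S :|: [set i]) - v S = 0) ->
     forall S, S \in V -> vs i S = 0) /\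
  (forall (v v' : {set T} -> R) (a a' : R) (vs vs' ws : T -> {set T} -> R),
     v set0 = 0 -> v' set0 = 0 ->
     (forall i, is_component V E w v i (vs i)) ->
     (forall i, is_component V E w v' i (vs' i)) ->
     (forall i, is_component V E w (fun S => a * v S + a' * v' S) i (ws i)) ->
     forall i S, S \in V -> ws i S = a * vs i S + a' * vs' i S).
Proof.
split.
  move=> v _ i; split; first exact: (component_exists hw V v i).
  move=> ui ui' cui cui'; exact: (component_unique hconn h0 hw cui cui').
split; first by move=> v vs v0 cvs; exact: (sum_components hconn h0 hw v0 cvs).
split; first by move=> v vs _ cvs i; exact: (component_null_player hconn h0 hw (cvs i)).
move=> v v' a a' vs vs' ws _ _ cvs cvs' cws i.
exact: (component_linear hconn h0 hw (cvs i) (cvs' i) (cws i)).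
Qed.
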